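(* Fix a positive integer $k$. For all real $\tilde c_0$ and $A_1$, and for every $n\ge0$ and every sequence $s$ of non-negative integers with finitely many nonzero terms, the number $B^n_s$ computed with $w=\tilde c_{k-1}$ is homogeneous of degree $|s|$ in $A_1$: there is a number $\beta^n_s(k)$, depending only on $n,s,k$ (not on $\tilde c_0$ or $A_1$), with $B^n_s=\beta^n_s(k)\,A_1^{|s|}$.
   Context: Given real numbers $\tilde c_0,A_1,w$, set $\tilde c_j=\tilde c_0-jA_1$ for all integers $j$. Sequences $s=(s_0,s_1,\dots)$ are integer sequences with finitely many nonzero terms; $(0)$ the zero sequence; $|s|=\sum s_i$, $[s]=\sum s_i(i+1)$; $\sigma_0=(1,0,0,\dots)$, and for $i\ge1$, $\sigma_i$ has $-1$ at position $i-1$, $+1$ at position $i$, $0$ elsewhere. For $n\ge0$ and $s$ with non-negative entries, $B^n_s$ is defined by induction on $n+[s]$: $B^0_{(0)}=1$, and otherwise $B^n_s=(1-\delta_{s_0,0})(n+|s|-1)(\tilde c_{n+|s|-2}-w)\sum_{l=0}^{n-1}B^l_{s-\sigma_0}+\sum_{i\ge1}(1-\delta_{s_i,0})(s_{i-1}+1)\sum_{l=0}^{n-1}B^l_{s-\sigma_i}$ (empty sums vanish). *)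

From HB Require Import structures.
From mathcomp Require Import all_boot all_order all_algebra.
From mathcomp Require Import reals.
Set Implicit Arguments. Unset Strict Implicit. Unset Printing Implicit Defensive.
Import Order.TTheory GRing.Theory Num.Theory.
Local Open Scope ring_scope.

(* Finitely supported integer sequences s = (s_0, s_1, ...) with non-negative
   entries are represented by s : seq nat, with s_i := nth 0 s i (trailing
   positions are 0). *)

(* |s| = sumn s ; [s] = \sum_i s_i (i+1) *)
Definition wt (s : seq nat) : nat := (\sum_(i < size s) nth 0 s i * i.+1)%N.

Definition sub_sigma0 (s : seq nat) : seq nat :=
  set_nth 0%N s 0 (nth 0%N s 0).-1.

Definition sub_sigma (s : seq nat) (i : nat) : seq nat :=
  let s' := set_nth 0%N s i (nth 0%N s i).-1 in
  set_nth 0%N s' i.-1 (nth 0%N s' i.-1).+1.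

Definition ct {R : realType} (c0 A1 : R) (j : int) : R := c0 - j%:~R * A1.

(* B with fuel f; correct whenever f >= n + [s] (fuel decreases by one
   per recursive call while n + [s] decreases by at least two). *)
Fixpoint Bf {R : realType} (c0 A1 w : R) (f n : nat) (s : seq nat) : R :=
  match f with
  | 0%N => if (n == 0%N) && (sumn s == 0%N) then 1 else 0
  | f'.+1 =>
    if (n == 0%N) && (sumn s == 0%N) then 1 else
      (if nth 0%N s 0 != 0%N then
         ((n + sumn s)%:R - 1) * (ct c0 A1 ((n + sumn s)%:Z - 2) - w)
           * \sum_(l < n) Bf c0 A1 w f' l (sub_sigma0 s)
       else 0)
    + \sum_(1 <= i < size s | nth 0%N s i != 0%N)
        (nth 0%N s i.-1).+1%:R * \sum_(l < n) Bf c0 A1 w f' l (sub_sigma s i)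
  end.

Definition B {R : realType} (c0 A1 w : R) (n : nat) (s : seq nat) : R :=
  Bf c0 A1 w (n + wt s) n s.

(* The recursion for B only ever multiplies by w through the factor
   c~_{m-2} - w.  With w = c~_j this factor is (j + 2 - m) A_1, free of c~_0,
   and each recursive step removing sigma_0 lowers |s| by one and contributes
   exactly one such factor, while the steps removing sigma_i, i >= 1, keep |s|.
   Hence B^n_s is A_1^|s| times its value at c~_0 = 0, A_1 = 1. *)

From HB Require Import structures.
From mathcomp Require Import all_boot all_order all_algebra.
From mathcomp Require Import reals.
From mathcomp Require Import zify ring.
Import Order.TTheory GRing.Theory Num.Theory.
Local Open Scope ring_scope.

Lemma leq_nth_sumn (s : seq nat) i : (nth 0%N s i <= sumn s)%N.
Proof.
elim: s i => [|a s IH] [|i] //=; first exact: leq_addr.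
exact: leq_trans (IH i) (leq_addl _ _).
Qed.

Lemma sumn_sub_sigma0 (s : seq nat) : nth 0%N s 0 != 0%N ->
  sumn s = (sumn (sub_sigma0 s)).+1.
Proof.
by move=> s0; rewrite /sub_sigma0 sumn_set_nth0; have := leq_nth_sumn s 0; lia.
Qed.

Lemma sumn_sub_sigma (s : seq nat) i : nth 0%N s i != 0%N ->
  sumn (sub_sigma s i) = sumn s.
Proof.
by move=> si; rewrite /sub_sigma !sumn_set_nth0; have := leq_nth_sumn s i; lia.
Qed.

Lemma ct_sub (R : realType) (c0 A1 : R) (i j : int) :
  ct c0 A1 i - ct c0 A1 j = (ct 0 1 i - ct 0 1 j) * A1.
Proof. by rewrite /ct; ring. Qed.

Lemma Bf_ct_homogeneous (R : realType) (j : int) f n s (c0 A1 : R) :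
  Bf c0 A1 (ct c0 A1 j) f n s = Bf 0 1 (ct 0 1 j) f n s * A1 ^+ sumn s.
Proof.
elim: f n s => [|f IH] n s /=.
  by case: ifP => [/andP[_ /eqP->]|_]; rewrite ?mul1r ?mul0r.
case: ifP => [/andP[_ /eqP->]|_]; first by rewrite mul1r.
rewrite [RHS]mulrDl; congr (_ + _).
  case: ifP => [s0|_]; last by rewrite mul0r.
  under eq_bigr => l _ do rewrite IH.
  rewrite -big_distrl /= ct_sub (sumn_sub_sigma0 _ s0) exprS.
  ring.
rewrite big_distrl /=; apply: eq_bigr => i si.
under eq_bigr => l _ do rewrite IH sumn_sub_sigma //.
by rewrite -big_distrl /= mulrA.
Qed.

Theorem lemma7p8 (R : realType) (k : nat) (hk : (0 < k)%N) :
  forall (n : nat) (s : seq nat), exists beta : R,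
    forall c0 A1 : R,
      B c0 A1 (ct c0 A1 (k%:Z - 1)) n s = beta * A1 ^+ sumn s.
Proof.
move=> n s; exists (B 0 1 (ct 0 1 (k%:Z - 1)) n s) => c0 A1.
exact: Bf_ct_homogeneous.
Qed.
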